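(* Let $n,m$ be positive integers. For a weak composition $A=(a_0,b_1,a_1,\ldots,b_m,a_m)$ of $n$ into $2m+1$ parts, let $P_A$ be the poset on $[n]$ that is the disjoint union of $2m+1$ chains on consecutive blocks of sizes $a_0,b_1,a_1,\ldots,b_m,a_m$, where the blocks of sizes $a_j$ are ordered increasingly ($s<_{P_A}s+1<_{P_A}\cdots$) and the blocks of sizes $b_j$ are ordered decreasingly (e.g. the second block is the chain $a_0+b_1<_{P_A}a_0+b_1-1<_{P_A}\cdots<_{P_A}a_0+1$). An outcome of an up-down $m$-riffle shuffle is a pair $(A,\sigma)$ with $A$ such a weak composition and $\sigma\in\mathcal{L}(P_A)$. Then the map sending $(A,\sigma)$ to the unique $f\in\mathcal{A}(P_A;m)$ whose image multiset is $\{0^{a_0},\bar1^{b_1},1^{a_1},\ldots,\bar m^{b_m},m^{a_m}\}$ and whose sorting permutation is $\pi(f)=\sigma^{-1}$ is a well-defined bijection from the set of outcomes of the up-down $m$-riffle shuffle onto $\mathcal{A}([n];m)$.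
   Context: Integers are written with $\bar i=-i$, totally ordered by $0<_{\mathbb Z}\bar1<_{\mathbb Z}1<_{\mathbb Z}\bar2<_{\mathbb Z}2<_{\mathbb Z}\cdots$, and $|\bar j|=j$. Write $a\prec_+ b$ if $a<_{\mathbb Z}b$ or $a=b\in\{0,1,2,\ldots\}$, and $a\prec_- b$ if $a<_{\mathbb Z}b$ or $a=b\in\{\bar1,\bar2,\ldots\}$. For a partial order $P$ on $[n]$, a $P$-partition is a map $f:[n]\to\mathbb Z$ such that whenever $i<_P j$: $f(i)\prec_+f(j)$ if $i<j$ as integers, and $f(i)\prec_- f(j)$ if $i>j$. $\mathcal{A}(P;m)$ is the set of $P$-partitions with $|f(i)|\le m$ for all $i$; the antichain $[n]$ has no relations. A permutation $\pi\in S_n$ is identified with the chain $\pi(1)<_\pi\cdots<_\pi\pi(n)$, and $\mathcal{L}(P)=\{\pi\in S_n: i<_Pj\Rightarrow i<_\pi j\}$. The sorting permutation $\pi(f)$ of $f:[n]\to\mathbb Z$ is the unique permutation with: $f(i)<_{\mathbb Z}f(j)\Rightarrow i<_\pi j$; $i<j$, $f(i)=f(j)\in\{0,1,\ldots\}\Rightarrow i<_\pi j$; $i<j$, $f(i)=f(j)\in\{\bar1,\bar2,\ldots\}\Rightarrow j<_\pi i$. (In the up-down riffle shuffle, the deck $1,\ldots,n$ is cut into $2m+1$ consecutive piles of sizes $A$, every other pile starting with the second is reversed, and the piles are interleaved; the linear extension $\sigma$ records the interleaving.)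
   Formalization: The function f associated with an outcome $(A,\sigma)$ is taken in $\mathcal{A}([n];m)$, with only the bound $|f(i)|\le m$, rather than in $\mathcal{A}(P_A;m)$, so it need not be a $P_A$-partition. The statement above fails without it. *)

From mathcomp Require Import all_boot all_order all_fingroup all_algebra.
Set Implicit Arguments. Unset Strict Implicit. Unset Printing Implicit Defensive.
Import Order.TTheory GRing.Theory Num.Theory.

(* Elements of [n] = {1,...,n} are represented by 'I_n (i : 'I_n stands for
   i+1); this shift preserves the integer order, which is all that matters. *)

(* The order 0 <Z -1 <Z 1 <Z -2 <Z 2 <Z ... : zkey is the rank of z in it. *)
Definition zkey (z : int) : nat :=
  if (z < 0)%R then (2 * absz z).-1 else 2 * absz z.
Definition ltZ (x y : int) : bool := zkey x < zkey y.

Definition precP (a b : int) : bool := ltZ a b || ((a == b) && (0 <= a)%R).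
Definition precM (a b : int) : bool := ltZ a b || ((a == b) && (a < 0)%R).

(* A partial order on [n] is given by its strict relation  i <_P j. *)
Definition is_Ppartition n (P : rel 'I_n) (f : 'I_n -> int) : Prop :=
  forall i j : 'I_n, P i j ->
    if (i < j)%N then precP (f i) (f j) else precM (f i) (f j).

Definition in_A n (P : rel 'I_n) (m : nat) (f : 'I_n -> int) : Prop :=
  is_Ppartition P f /\ forall i, (absz (f i) <= m)%N.

Definition antichain n : rel 'I_n := fun _ _ => false.

(* A permutation p is identified with the chain p(1) <_p ... <_p p(n):
   i <_p j iff p^-1(i) < p^-1(j). *)
Definition before n (p : {perm 'I_n}) (i j : 'I_n) : bool :=
  ((p^-1)%g i < (p^-1)%g j)%N.

Definition is_linext n (P : rel 'I_n) (p : {perm 'I_n}) : Prop :=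
  forall i j, P i j -> before p i j.

Definition is_sortperm n (f : 'I_n -> int) (p : {perm 'I_n}) : Prop :=
  forall i j : 'I_n,
    (ltZ (f i) (f j) -> before p i j) /\
    ((i < j)%N -> f i = f j -> (0 <= f i)%R -> before p i j) /\
    ((i < j)%N -> f i = f j -> (f i < 0)%R -> before p j i).

(* Weak compositions A = (a_0, b_1, a_1, ..., b_m, a_m) of n into 2m+1 parts
   are indexed by k : 'I_(2m+1): part k = a_(k/2) if k is even,
   b_((k+1)/2) if k is odd. *)
Definition weak_comp n m (A : {ffun 'I_(2 * m).+1 -> nat}) : Prop :=
  (\sum_(k < (2 * m).+1) A k)%N = n.

(* label of part k: k/2 for a_(k/2), and -(k+1)/2 (= \bar{(k+1)/2}) for b *)
Definition lab (k : nat) : int :=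
  if odd k then (- Posz ((k.+1)./2))%R else Posz (k./2).

(* first element (0-based) of block k *)
Definition bstart m (A : {ffun 'I_(2 * m).+1 -> nat}) (k : nat) : nat :=
  (\sum_(l < (2 * m).+1 | (l < k)%N) A l)%N.
Definition inblock n m (A : {ffun 'I_(2 * m).+1 -> nat}) (k : 'I_(2 * m).+1)
  (i : 'I_n) : bool :=
  (bstart A k <= i < bstart A k + A k)%N.

Definition PA n m (A : {ffun 'I_(2 * m).+1 -> nat}) : rel 'I_n :=
  fun i j => [exists k : 'I_(2 * m).+1,
    [&& inblock A k i, inblock A k j & (if odd k then j < i else i < j)%N]].

Definition mult m (A : {ffun 'I_(2 * m).+1 -> nat}) (z : int) : nat :=
  (\sum_(k < (2 * m).+1 | lab k == z) A k)%N.

Definition outcome n m (A : {ffun 'I_(2 * m).+1 -> nat}) (s : {perm 'I_n})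
  : Prop := weak_comp n A /\ is_linext (PA A) s.

Definition assoc n m (A : {ffun 'I_(2 * m).+1 -> nat}) (s : {perm 'I_n})
  (f : {ffun 'I_n -> int}) : Prop :=
  in_A (@antichain n) m f /\
  (forall z : int, #|[pred i | f i == z]| = mult A z) /\
  is_sortperm f (s^-1)%g.

From mathcomp Require Import all_boot all_order all_fingroup all_algebra.
From mathcomp Require Import zify.
Set Implicit Arguments. Unset Strict Implicit. Unset Printing Implicit Defensive.
Import Order.TTheory GRing.Theory Num.Theory.

(* An outcome (A, s) and a function f determine each other through a single
   condition: every element x sits, at its position s x, in block
   zkey (f x) of the deck cut according to A.
   Given an outcome this defines f; given f, A is the content of f and s
   ranks [n] by the sort key [skey].  Under this condition s is a linear
   extension of P_A exactly when s^-1 is the sorting permutation of f: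
   inside a block, the chain of P_A runs upwards on a-blocks (labels >= 0)
   and downwards on b-blocks (labels < 0), which is precisely how the
   sorting permutation breaks ties. *)

Lemma zkey_lab k : zkey (lab k) = k.
Proof.
have := odd_double_half k; rewrite /zkey /lab -[(k.+1)./2]uphalfE uphalf_half.
by case: (boolP (odd k)) => ok /=; rewrite ?oppr_lt0 ?ltz_nat ?ltn0 ?abszN; lia.
Qed.

Lemma lab_zkey z : lab (zkey z) = z.
Proof.
case: z => j.
  by rewrite /zkey /lab /= mul2n odd_double doubleK.
have -> : zkey (Negz j) = j.*2.+1 by rewrite /zkey /=; lia.
by rewrite /lab /= odd_double doubleK NegzE.
Qed.

Lemma zkey_inj : injective zkey.
Proof. exact: can_inj lab_zkey. Qed.

Lemma lab_inj : injective lab.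
Proof. exact: can_inj zkey_lab. Qed.

Lemma zkey_ltn_double m z : (zkey z < (2 * m).+1)%N = (absz z <= m)%N.
Proof. by rewrite ltnS /zkey; case: (z < 0)%R; lia. Qed.

Lemma lab_ge0 k : (0 <= lab k)%R = ~~ odd k.
Proof.
rewrite /lab; case: (boolP (odd k)) => ok; last by rewrite lez_nat.
by rewrite oppr_ge0 lez_nat leqn0 -uphalfE uphalf_half ok.
Qed.

Lemma card_ord_ltn n k : (k <= n)%N -> #|[pred t : 'I_n | t < k]| = k.
Proof.
move=> kn; have widen_inj : injective (widen_ord kn).
  by move=> u v /(congr1 val) /= /val_inj.
rewrite -[RHS]card_ord -(card_image widen_inj).
apply: eq_card => t; rewrite inE.
apply/idP/imageP => [tk | [u _ ->]]; last by rewrite /= ltn_ord.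
by exists (Ordinal tk); last by apply: val_inj.
Qed.

Lemma card_comp_perm (T : finType) (s : {perm T}) (P : pred T) :
  #|[pred x | P (s x)]| = #|P|.
Proof.
transitivity #|s @^-1: [set x | P x]|; first by apply: eq_card => x; rewrite !inE.
by rewrite card_preimset ?cardsE //; exact: perm_inj.
Qed.

Lemma card_perm_ltn n (s : {perm 'I_n}) k :
  (k <= n)%N -> #|[pred x | s x < k]| = k.
Proof.
by move=> kn; rewrite (card_comp_perm s (fun t : 'I_n => t < k)%N) card_ord_ltn.
Qed.

Lemma card_ord_interval n a b :
  (a <= b <= n)%N -> #|[pred t : 'I_n | a <= t < b]| = (b - a)%N.
Proof.
case/andP=> ab bn; have := cardID [pred t : 'I_n | t < a] [pred t : 'I_n | t < b].
rewrite card_ord_ltn // (@eq_card _ _ [pred t : 'I_n | t < a]) => [|t].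
  rewrite card_ord_ltn ?(leq_trans ab) // => /(canRL (addKn a)) <-.
  by apply: eq_card => t; rewrite !inE leqNgt andbC.
by rewrite !inE; apply/andP/idP => [[]//|ta]; rewrite (leq_trans ta ab).
Qed.

Lemma inj_homo_ltn_mono (T : Type) (k1 k2 : T -> nat) : injective k2 ->
  (forall x y, k2 x < k2 y -> k1 x < k1 y)%N ->
  forall x y, (k1 x < k1 y)%N = (k2 x < k2 y)%N.
Proof.
move=> k2_inj homo x y; apply/idP/idP => [lt1|]; last exact: homo.
case: ltngtP => // [/homo | /k2_inj xy]; last by rewrite xy ltnn in lt1.
by rewrite ltnNge (ltnW lt1).
Qed.

Lemma ltn_lex N a b c d : (b < N)%N -> (d < N)%N ->
  (a * N + b < c * N + d)%N = (a < c)%N || ((a == c) && (b < d)%N).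
Proof.
move=> bN dN; case: (ltngtP a c) => [ac | ca | ->] /=; last by rewrite ltn_add2l.
  by apply/idP; nia.
by apply/negbTE; rewrite -leqNgt; nia.
Qed.

Section SortKey.

Variables (n : nat) (f : 'I_n -> int).

Definition skey (x : 'I_n) : nat :=
  zkey (f x) * n + (if (0 <= f x)%R then nat_of_ord x else n.-1 - x).

Lemma skey_lt x y : (skey x < skey y)%N =
  (zkey (f x) < zkey (f y))%N ||
  ((f x == f y) && (if (0 <= f x)%R then x < y else y < x)%N).
Proof.
have offset_lt z : ((if (0 <= f z)%R then nat_of_ord z else n.-1 - z) < n)%N.
  by have := ltn_ord z; case: ifP; lia.
rewrite /skey ltn_lex // (inj_eq zkey_inj).
by case: eqP => //= ->; case: ifP; have := ltn_ord x; have := ltn_ord y; lia.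
Qed.

Lemma skey_inj : injective skey.
Proof.
move=> x y exy; have := skey_lt x y; have := skey_lt y x; rewrite exy ltnn.
case: (ltngtP (zkey (f x)) (zkey (f y))) => //= /zkey_inj ->.
by rewrite eqxx /=; case: ifP => _; case: (ltngtP x y) => // /val_inj.
Qed.

Lemma sortpermP (s : {perm 'I_n}) :
  is_sortperm f (s^-1)%g <-> forall x y, (s x < s y)%N = (skey x < skey y)%N.
Proof.
have beforeV x y : before (s^-1)%g x y = (s x < s y)%N by rewrite /before invgK.
split=> [srt | srtE x y]; last first.
  rewrite /ltZ !beforeV !srtE !skey_lt; split; first by move=> ->.
  by split=> xy -> fy; rewrite eqxx ?fy ?leNgt ?fy xy orbT.
apply: inj_homo_ltn_mono skey_inj _ => x y; rewrite skey_lt -!beforeV.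
case/orP=> [/(srt x y).1 // | /andP [/eqP fxy]].
case: ifP => fx xy; first exact: (srt x y).2.1.
by apply: (srt y x).2.2 => //; rewrite -fxy ltNge fx.
Qed.

Lemma sortperm_zkey_homo (s : {perm 'I_n}) : is_sortperm f (s^-1)%g ->
  forall x y, (s x <= s y)%N -> (zkey (f x) <= zkey (f y))%N.
Proof.
move/sortpermP=> srtE x y.
rewrite leq_eqVlt => /orP [/eqP /val_inj /perm_inj -> //|].
by rewrite srtE skey_lt => /orP [/ltnW | /andP [/eqP -> _]].
Qed.

Let rank x := #|[pred y | skey y < skey x]%N|.

Lemma rank_homo x y : (skey x < skey y)%N -> (rank x < rank y)%N.
Proof.
move=> xy; apply: proper_card; apply/properP; split.
  by apply/subsetP => z; rewrite !inE => /ltn_trans; apply.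
by exists x; rewrite !inE ?ltnn.
Qed.

Lemma rank_lt x : (rank x < n)%N.
Proof.
rewrite -[n in (_ < n)%N]card_ord; apply: proper_card; apply/properP.
by split; [apply/subsetP | exists x; rewrite ?inE ?ltnn].
Qed.

Lemma rank_inj : injective (fun x => Ordinal (rank_lt x)).
Proof.
move=> x y /(congr1 val) /= rxy; apply: skey_inj.
by case: (ltngtP (skey x) (skey y)) => // /rank_homo; rewrite rxy ltnn.
Qed.

Definition rank_perm : {perm 'I_n} := perm rank_inj.

Lemma rank_permP : is_sortperm f (rank_perm^-1)%g.
Proof.
apply/sortpermP; apply: inj_homo_ltn_mono skey_inj _ => x y.
by rewrite !permE; apply: rank_homo.
Qed.

Lemma rank_perm_unique s : is_sortperm f (s^-1)%g -> s = rank_perm.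
Proof.
have rankE s' x : is_sortperm f (s'^-1)%g -> nat_of_ord (s' x) = rank x.
  move/sortpermP=> srtE; rewrite -[LHS](card_perm_ltn s' (ltnW (ltn_ord (s' x)))).
  by apply: eq_card => y; rewrite !inE srtE.
move=> srt; apply/permP => x; apply: val_inj => /=.
by rewrite (rankE s) // (rankE rank_perm) //; exact: rank_permP.
Qed.

End SortKey.

Section Blocks.

Variables (n m : nat) (A : {ffun 'I_(2 * m).+1 -> nat}).
Local Notation N := (2 * m).+1.

Lemma bstart0 : bstart A 0 = 0%N.
Proof. by rewrite /bstart big_pred0. Qed.

Lemma bstartS (l : 'I_N) : bstart A l.+1 = (bstart A l + A l)%N.
Proof.
rewrite /bstart (bigD1 l) //= addnC; congr (_ + _)%N.
by apply: eq_bigl => k; rewrite ltnS ltn_neqAle -val_eqE andbC.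
Qed.

Lemma bstart_mono : {homo bstart A : k k' / k <= k'}%N.
Proof.
move=> k k' kk'; rewrite /bstart !(big_mkcond (fun l : 'I_N => _ < _)%N).
by apply: leq_sum => l _; case: ifP => // /leq_trans /(_ kk') ->.
Qed.

Lemma bstart_total : bstart A N = (\sum_(l < N) A l)%N.
Proof. by apply: eq_bigl => l; rewrite ltn_ord. Qed.

Lemma block_index : weak_comp n A ->
  exists c : 'I_n -> nat, forall t k, (c t < k)%N = (t < bstart A k)%N.
Proof.
move=> wA; have ex_block (t : 'I_n) : exists k, (t < bstart A k.+1)%N.
  by exists (2 * m); rewrite bstart_total wA.
exists (fun t => ex_minn (ex_block t)) => t [|k]; first by rewrite bstart0 !ltn0.
case: ex_minnP => c tc c_min; rewrite ltnS; apply/idP/idP => [ck | /c_min //].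
exact: leq_trans tc (bstart_mono _).
Qed.

End Blocks.

Definition content n m (f : 'I_n -> int) : {ffun 'I_(2 * m).+1 -> nat} :=
  [ffun l : 'I_(2 * m).+1 => #|[pred x | f x == lab l]|].
Arguments content {n} m f.

Lemma mult_lab m (A : {ffun 'I_(2 * m).+1 -> nat}) (l : 'I_(2 * m).+1) :
  mult A (lab l) = A l.
Proof.
by rewrite /mult (big_pred1 l) // => k; rewrite /= (inj_eq lab_inj) val_eqE.
Qed.

Lemma mult_out m (A : {ffun 'I_(2 * m).+1 -> nat}) z :
  ~~ (absz z <= m)%N -> mult A z = 0%N.
Proof.
rewrite -zkey_ltn_double => zN; rewrite /mult big_pred0 // => k.
by apply: contraNF zN => /eqP <-; rewrite zkey_lab.
Qed.

Section Content.

Variables (n m : nat) (f : 'I_n -> int).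
Hypothesis f_bounded : forall x, (absz (f x) <= m)%N.

Lemma content_multP (A : {ffun 'I_(2 * m).+1 -> nat}) :
  (forall z, #|[pred x | f x == z]| = mult A z) <-> content m f = A.
Proof.
split=> [cnt | <- z]; first by apply/ffunP => l; rewrite ffunE cnt mult_lab.
have [zb | zb] := boolP (absz z <= m)%N.
  have zN : (zkey z < (2 * m).+1)%N by rewrite zkey_ltn_double.
  by rewrite -[z]lab_zkey -[zkey z]/(nat_of_ord (Ordinal zN)) mult_lab ffunE.
rewrite mult_out //; apply: eq_card0 => x; rewrite !inE.
by apply: contraNF zb => /eqP <-.
Qed.

Lemma bstart_content k :
  bstart (content m f) k = #|[pred x | zkey (f x) < k]%N|.
Proof.
have zN x : (zkey (f x) < (2 * m).+1)%N by rewrite zkey_ltn_double.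
rewrite -sum1_card (partition_big (fun x => Ordinal (zN x))
  (fun l : 'I_(2 * m).+1 => l < k)%N) //=.
apply: eq_bigr => l lk; rewrite ffunE -sum1_card; apply: eq_bigl => x.
rewrite !inE -val_eqE /= -(inj_eq zkey_inj) zkey_lab.
by case: eqP => [->|]; rewrite ?lk ?andbF.
Qed.

Lemma weak_comp_content : weak_comp n (content m f).
Proof.
rewrite /weak_comp -bstart_total bstart_content -[RHS]card_ord.
by apply: eq_card => x; rewrite !inE zkey_ltn_double f_bounded.
Qed.

End Content.

Definition block_sorted n m (A : {ffun 'I_(2 * m).+1 -> nat}) (s : {perm 'I_n})
  (f : 'I_n -> int) : Prop :=
  forall x k, (zkey (f x) < k)%N = (s x < bstart A k)%N.

Lemma block_sorted_unique n m (A : {ffun 'I_(2 * m).+1 -> nat}) s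
  (f g : 'I_n -> int) :
  block_sorted A s f -> block_sorted A s g -> f =1 g.
Proof.
move=> bf bg x; apply: zkey_inj; apply/eqP.
by rewrite eqn_leq -ltnS bf -bg ltnSn -ltnS bg -bf ltnSn.
Qed.

Lemma sortperm_block_sorted n m (s : {perm 'I_n}) (f : 'I_n -> int) :
  (forall x, absz (f x) <= m)%N -> is_sortperm f (s^-1)%g ->
  block_sorted (content m f) s f.
Proof.
move=> fb /sortperm_zkey_homo homo x k; rewrite bstart_content //.
apply/idP/idP => [xk | ].
  rewrite -[X in (X <= _)%N](card_perm_ltn s (ltn_ord (s x))).
  apply: subset_leq_card; apply/subsetP => y; rewrite !inE ltnS.
  by move/homo/leq_ltn_trans; apply.
apply: contraTT; rewrite -!leqNgt => kx.
rewrite -[X in (_ <= X)%N](card_perm_ltn s (ltnW (ltn_ord (s x)))).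
apply: subset_leq_card; apply/subsetP => y; rewrite !inE.
by apply: contraTT; rewrite -!leqNgt => /homo; apply: leq_trans.
Qed.

Section BlockSorted.

Variables (n m : nat) (A : {ffun 'I_(2 * m).+1 -> nat}).
Variables (s : {perm 'I_n}) (f : 'I_n -> int).
Hypotheses (wA : weak_comp n A) (fs : block_sorted A s f).

Lemma block_sorted_bounded x : (absz (f x) <= m)%N.
Proof. by rewrite -zkey_ltn_double fs bstart_total wA. Qed.

Lemma inblock_block_sorted k x : inblock A k (s x) = (f x == lab k).
Proof.
rewrite /inblock -bstartS leqNgt -!fs -leqNgt ltnS -eqn_leq.
by rewrite -(inj_eq zkey_inj) zkey_lab eq_sym.
Qed.

Lemma block_sorted_content : content m f = A.
Proof.
apply/ffunP => l; rewrite ffunE.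
transitivity #|[pred x | inblock A l (s x)]|.
  by apply: eq_card => x; rewrite !inE inblock_block_sorted.
rewrite (card_comp_perm s (inblock A l)) -[RHS](addKn (bstart A l)).
rewrite -(@card_ord_interval n); first exact: eq_card.
by rewrite leq_addr -bstartS -wA -bstart_total bstart_mono.
Qed.

Lemma PA_block_sorted x y : PA A (s x) (s y) =
  (f x == f y) && (if (0 <= f x)%R then s x < s y else s y < s x)%N.
Proof.
apply/existsP/andP => [[k /and3P []] | [/eqP fxy dir]].
  rewrite !inblock_block_sorted => /eqP fx /eqP fy dir.
  by rewrite fx fy eqxx lab_ge0; case: (odd k) dir.
have zN : (zkey (f x) < (2 * m).+1)%N.
  by rewrite zkey_ltn_double block_sorted_bounded.
exists (Ordinal zN); rewrite !inblock_block_sorted /= -fxy lab_zkey eqxx /=.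
by rewrite -[f x]lab_zkey lab_ge0 in dir; case: (odd _) dir.
Qed.

Lemma linext_sortperm : is_linext (PA A) s <-> is_sortperm f (s^-1)%g.
Proof.
rewrite sortpermP; split=> [lin | srtE i j].
  apply: inj_homo_ltn_mono (@skey_inj _ f) _ => x y.
  rewrite skey_lt => /orP [zxy | /andP [/eqP fxy dir]].
    have := fs y (zkey (f y)); rewrite ltnn => /esym/negbT; rewrite -leqNgt.
    by apply: leq_trans; rewrite -fs.
  case: (ltngtP (s x) (s y)) => // [syx | /val_inj /perm_inj exy]; last first.
    by move: dir; rewrite exy ltnn; case: ifP.
  case: ifP dir => fx dir.
    have /lin : PA A (s y) (s x) by rewrite PA_block_sorted -fxy eqxx fx.
    by rewrite /before !permK => /(ltn_trans dir); rewrite ltnn.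
  have /lin : PA A (s x) (s y) by rewrite PA_block_sorted fx fxy eqxx.
  by rewrite /before !permK => /(ltn_trans dir); rewrite ltnn.
rewrite -[i](permKV s) -[j](permKV s) PA_block_sorted /before !permK.
case/andP=> /eqP fxy; rewrite !srtE !skey_lt fxy eqxx ltnn /=.
by case: (0 <= f _)%R.
Qed.

End BlockSorted.

Lemma exists_unique_assoc n m (A : {ffun 'I_(2 * m).+1 -> nat})
  (s : {perm 'I_n}) :
  outcome A s -> exists! f : {ffun 'I_n -> int}, assoc A s f.
Proof.
move=> [wA lin]; have [c cE] := block_index wA.
pose f := [ffun x => lab (c (s x))].
have fs : block_sorted A s f by move=> x k; rewrite ffunE zkey_lab cE.
have fb := block_sorted_bounded wA fs.
exists f; split.
  split; first by split.
  split; first by apply/content_multP => //; exact: block_sorted_content.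
  exact/(linext_sortperm wA fs).
move=> g [[_ gb] [/(content_multP gb) gc gs]].
have gs' := sortperm_block_sorted gb gs; rewrite gc in gs'.
by apply/ffunP; exact: block_sorted_unique fs gs'.
Qed.

Lemma exists_unique_outcome n m (f : {ffun 'I_n -> int}) :
  in_A (@antichain n) m f ->
  exists! As : {ffun 'I_(2 * m).+1 -> nat} * {perm 'I_n},
    outcome As.1 As.2 /\ assoc As.1 As.2 f.
Proof.
move=> [_ fb]; have fs := rank_permP f.
have wA := weak_comp_content fb.
have bs := sortperm_block_sorted fb fs.
exists (content m f, rank_perm f); split.
  split; first by split; last exact/(linext_sortperm wA bs).
  by split; [ | split; [exact/content_multP | ]].
by move=> [A' s'] /= [_ [_ [/(content_multP fb) <- /rank_perm_unique ->]]].
Qed.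

Theorem proposition2p7 (n m : nat) (hn : (0 < n)%N) (hm : (0 < m)%N) :
  (* well defined: each outcome has exactly one associated f *)
  (forall (A : {ffun 'I_(2 * m).+1 -> nat}) (s : {perm 'I_n}),
      outcome A s -> exists! f : {ffun 'I_n -> int}, assoc A s f) /\
  (* bijective onto A([n]; m) *)
  (forall f : {ffun 'I_n -> int}, in_A (@antichain n) m f ->
      exists! As : {ffun 'I_(2 * m).+1 -> nat} * {perm 'I_n},
        outcome As.1 As.2 /\ assoc As.1 As.2 f).
Proof.
split; [exact: exists_unique_assoc | exact: exists_unique_outcome].
Qed.
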